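(* Let $B$ be a finite set, let $\sigma,\mu\in\mathrm{Sym}(B)$ and let $B'\subseteq B$. Then \[\sigma_{B'}\,\mu_{B'}=(\sigma\,\mu_{B'})_{B'}\qquad\text{and}\qquad \sigma_{|B'}\,\mu_{|B'}=(\sigma\,\mu_{B'})_{|B'}.\]
   Context: Permutations are composed as functions: $\sigma\mu=\sigma\circ\mu$. For $\mu\in\mathrm{Sym}(B)$ and $B'\subseteq B$, the restriction $\mu_{|B'}\in\mathrm{Sym}(B')$ is defined by $\mu_{|B'}(b)=\mu^k(b)$ for $b\in B'$, where $k$ is the least positive integer with $\mu^k(b)\in B'$. The cutting-out $\mu_{B'}\in\mathrm{Sym}(B)$ is the permutation equal to $\mu_{|B'}$ on $B'$ and to the identity on $B\setminus B'$. *)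

From mathcomp Require Import all_boot all_fingroup.
From Stdlib Require Import Lia. From mathcomp Require Import zify.
Set Implicit Arguments. Unset Strict Implicit. Unset Printing Implicit Defensive.
Local Open Scope group_scope.

Section Restriction.
Variable T : finType.
Implicit Types (mu : {perm T}) (A : {set T}).

(* Paper convention: (s t) = s o t.  MathComp's (s * t) applies s first,
   so the paper product s t is (t * s)%g. *)
Definition compp (s t : {perm T}) : {perm T} := t * s.

Lemma comppE s t x : compp s t x = s (t x).
Proof. by rewrite /compp permM. Qed.

Definition retk mu A (b : T) : nat :=
  (find (fun k => (mu ^+ k.+1) b \in A) (iota 0 #[mu])).+1.

Definition retf mu A (b : T) : T := (mu ^+ retk mu A b) b.

Lemma retk_spec mu A b : b \in A ->
  [/\ 0 < retk mu A b, (mu ^+ retk mu A b) b \in A &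
      forall j, 0 < j < retk mu A b -> (mu ^+ j) b \notin A].
Proof.
move=> bA.
set p := (fun k => (mu ^+ k.+1) b \in A).
have hp : has p (iota 0 #[mu]).
  apply/hasP; exists (#[mu].-1); first by rewrite mem_iota add0n prednK ?order_gt0 //= ltnSn.
  by rewrite /p prednK ?order_gt0 // expg_order perm1.
have hs : find p (iota 0 #[mu]) < size (iota 0 #[mu]) by rewrite -has_find.
split => //.
  have := nth_find 0 hp; rewrite nth_iota ?add0n //; by rewrite size_iota in hs.
move=> j /andP[j0 jk].
have := @before_find _ 0 p (iota 0 #[mu]) j.-1.
rewrite nth_iota; last by rewrite size_iota in hs; rewrite /retk -/p in jk; lia.
rewrite add0n /p prednK // => H; apply/negP => H'; move: H; rewrite H'.
move=> H; suff : true = false by []; apply: H; rewrite /retk in jk; lia.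
Qed.

Lemma retf_in mu A b : b \in A -> retf mu A b \in A.
Proof. by case/(retk_spec mu) => _ ? _. Qed.

Lemma retf_inj mu A b1 b2 : b1 \in A -> b2 \in A ->
  retf mu A b1 = retf mu A b2 -> b1 = b2.
Proof.
move=> h1 h2.
wlog le : b1 b2 h1 h2 / retk mu A b1 <= retk mu A b2.
  move=> W E; case: (leqP (retk mu A b1) (retk mu A b2)) => [l|l]; first exact: W.
  by symmetry; apply: W => //; apply: ltnW.
rewrite /retf => E.
have E2 : (mu ^+ retk mu A b2) b2 =
          (mu ^+ retk mu A b1) ((mu ^+ (retk mu A b2 - retk mu A b1)) b2).
  by rewrite -permM -expgD subnK.
rewrite E2 in E; move/perm_inj: E => E.
case: (posnP (retk mu A b2 - retk mu A b1)) => d.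
  by rewrite E d expg0 perm1.
have [_ _ H] := retk_spec mu h2.
have : (mu ^+ (retk mu A b2 - retk mu A b1)) b2 \notin A.
  apply: H; rewrite d /=; have [k0 _ _] := retk_spec mu h1; lia.
by rewrite -E h1.
Qed.

Definition cutfun mu A (b : T) : T := if b \in A then retf mu A b else b.

Lemma cutfun_inj mu A : injective (cutfun mu A).
Proof.
move=> b1 b2; rewrite /cutfun.
case: (boolP (b1 \in A)) => h1; case: (boolP (b2 \in A)) => h2 //.
- exact: retf_inj.
- by move=> E; move: (retf_in mu h1); rewrite E (negPf h2).
- by move=> E; move: (retf_in mu h2); rewrite -E (negPf h1).
Qed.

(* cutting-out mu_{A} in Sym(B) *)
Definition cutout mu A : {perm T} := perm (@cutfun_inj mu A).

Definition restrfun mu A (x : {b : T | b \in A}) : {b : T | b \in A} :=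
  exist _ (retf mu A (val x)) (retf_in mu (valP x)).

Lemma restrfun_inj mu A : injective (@restrfun mu A).
Proof.
move=> [x hx] [y hy] /(congr1 val) /= E.
by apply: val_inj => /=; exact: retf_inj hx hy E.
Qed.

(* restriction mu_{|A} in Sym(A) *)
Definition restr mu A : {perm {b : T | b \in A}} := perm (@restrfun_inj mu A).

End Restriction.

(* Started at b in B', the orbit of sigma mu_{B'} first jumps to
   c = mu_{|B'}(b) and then, since mu_{B'} fixes every point outside B',
   follows the sigma-orbit of c verbatim until that orbit re-enters B' at
   sigma_{|B'}(c).  Hence the first return of sigma mu_{B'} to B' is
   sigma_{|B'} mu_{|B'}, which gives both identities pointwise. *)
From mathcomp Require Import all_boot all_fingroup.
Local Open Scope group_scope.

Section FirstReturn.
Variable T : finType.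
Implicit Types (s t mu : {perm T}) (A : {set T}).

Lemma retf_unique mu A b k :
  b \in A -> 0 < k -> (mu ^+ k) b \in A ->
  (forall j, 0 < j < k -> (mu ^+ j) b \notin A) ->
  retf mu A b = (mu ^+ k) b.
Proof.
move=> bA k_gt0 kA k_first; have [r_gt0 rA r_first] := retk_spec mu bA.
rewrite /retf; case: (ltngtP (retk mu A b) k) => [r_lt_k | k_lt_r | -> //].
- by move: (k_first (retk mu A b)); rewrite r_gt0 r_lt_k rA => /(_ isT).
- by move: (r_first k); rewrite k_gt0 k_lt_r kA => /(_ isT).
Qed.

Lemma cutoutE mu A x : cutout mu A x = if x \in A then retf mu A x else x.
Proof. by rewrite permE. Qed.

Lemma cutout_out mu A x : x \notin A -> cutout mu A x = x.
Proof. by rewrite cutoutE => /negPf ->. Qed.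

Lemma restrE mu A (x : {b : T | b \in A}) : val (restr mu A x) = retf mu A (val x).
Proof. by rewrite permE. Qed.

Lemma expg_compp_outside s t A b j :
  {in [predC A], t =1 id} ->
  (forall i, 0 < i <= j -> (s ^+ i) (t b) \notin A) ->
  (compp s t ^+ j.+1) b = (s ^+ j.+1) (t b).
Proof.
move=> t_id; elim: j => [|j IHj] outA; first by rewrite !expg1 comppE.
rewrite expgSr permM comppE IHj => [|i /andP[i_gt0 le_ij]].
  by rewrite t_id ?inE ?outA ?leqnn // [in RHS]expgSr permM.
by rewrite outA // i_gt0 ltnW.
Qed.

Lemma retf_compp_cutout s mu A b : b \in A ->
  retf (compp s (cutout mu A)) A b = retf s A (retf mu A b).
Proof.
move=> bA; set c := retf mu A b; have cA : c \in A by apply: retf_in.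
have [k_gt0 kA k_first] := retk_spec s cA.
set k := retk s A c in k_gt0 kA k_first *.
have tau_iter j : 0 < j <= k ->
    (compp s (cutout mu A) ^+ j) b = (s ^+ j) c.
  case: j => // j /andP[_ lt_jk].
  (* cutoutE is instantiated explicitly below: left generic, it gets matched
     against (s ^+ _) _ and unification unfolds the power without end. *)
  rewrite (@expg_compp_outside _ _ A) => [|x|i /andP[i_gt0 le_ij]].
  - by rewrite (cutoutE mu A b) bA.
  - by rewrite inE; apply: cutout_out.
  - by rewrite (cutoutE mu A b) bA k_first // i_gt0 (leq_ltn_trans le_ij lt_jk).
have k_range : 0 < k <= k by rewrite k_gt0 leqnn.
rewrite [RHS]/retf -/k -(tau_iter k k_range).
apply: retf_unique => //; first by rewrite tau_iter.
move=> j /andP[j_gt0 lt_jk].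
by rewrite tau_iter ?k_first ?j_gt0 ?(ltnW lt_jk).
Qed.

End FirstReturn.

Theorem lemma1 (T : finType) (sigma mu : {perm T}) (B' : {set T}) :
  compp (cutout sigma B') (cutout mu B') = cutout (compp sigma (cutout mu B')) B' /\
  compp (restr sigma B') (restr mu B') = restr (compp sigma (cutout mu B')) B'.
Proof.
split.
- apply/permP => b; rewrite comppE !cutoutE.
  case: (boolP (b \in B')) => [bB' | /negPf ->//].
  by rewrite retf_in // retf_compp_cutout.
- apply/permP => x; apply: val_inj.
  by rewrite comppE !restrE retf_compp_cutout ?(valP x).
Qed.
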